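(* Let $K\ge 3$, $d\in\mathbb{N}$, $\eta>0$, and for each $k\in[K]=\{1,\dots,K\}$ let $n_k\in\mathbb{N}$ and points $x^k_1,\dots,x^k_{n_k}\in\mathbb{R}^d$ be given. Indices of marginals are taken cyclically: $K+1$ means $1$ and $0$ means $K$. For $\ell,t\in[K]$ define the matrix $\mathcal{K}^{(\ell,t)}\in\mathbb{R}^{n_\ell\times n_t}$ by $\mathcal{K}^{(\ell,t)}_{i,j}=\exp\!\big(-\tfrac1\eta\|x^\ell_i-x^t_j\|_2^2\big)$. Let $\mathcal{K}\in\mathbb{R}^{n_1\times\cdots\times n_K}$ be the kernel tensor of the circle-structured cost, $$\mathcal{K}_{i_1,\dots,i_K}=\exp\!\Big(-\tfrac1\eta\sum_{k=1}^{K}\|x^k_{i_k}-x^{k+1}_{i_{k+1}}\|_2^2\Big)=\prod_{k=1}^K\mathcal{K}^{(k,k+1)}_{i_k,i_{k+1}},$$ let $\phi^k\in\mathbb{R}^{n_k}$, $k\in[K]$, be arbitrary vectors and $\Phi=\bigotimes_{k=1}^K\phi^k$, i.e. $\Phi_{i_1,\dots,i_K}=\prod_{k=1}^K\phi^k_{i_k}$. For distinct $\ell,t\in[K]$ define $d(\ell,t)=t-\ell$ if $t\ge \ell$ and $d(\ell,t)=K-\ell+t$ otherwise, and define matrices $\alpha^{(\ell,t)}\in\mathbb{R}^{n_\ell\times n_t}$ recursively by $$\alpha^{(\ell,t)}=\begin{cases}\mathcal{K}^{(\ell,t)} & \text{if } d(\ell,t)=1,\\ \mathcal{K}^{(\ell,\ell+1)}\big(\phi^{\ell+1}\odot\alpha^{(\ell+1,t)}\big)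 & \text{otherwise.}\end{cases}$$ Then for every $k\in[K]$, $$P_k(\mathcal{K}\odot\Phi)=\Big(\big(\phi^k\odot\mathcal{K}^{(k,k+1)}\big)\odot\big(\phi^{k+1}\odot\alpha^{(k+1,k)}\big)^{\intercal}\Big)\mathbf{1}_{n_{k+1}},$$ i.e. $[P_k(\mathcal{K}\odot\Phi)]_{i}=\phi^k_{i}\sum_{j=1}^{n_{k+1}}\mathcal{K}^{(k,k+1)}_{i,j}\,\phi^{k+1}_j\,\alpha^{(k+1,k)}_{j,i}$ for $i\in[n_k]$.
   Context: $P_k$ denotes the $k$-th marginal projection of a tensor $T\in\mathbb{R}^{n_1\times\cdots\times n_K}$: $[P_k(T)]_{i}=\sum T_{i_1,\dots,i_K}$, the sum running over all indices $i_\ell\in[n_\ell]$, $\ell\ne k$, with $i_k=i$ fixed. For tensors of equal size, $\odot$ is the entrywise (Hadamard) product. For a vector $v\in\mathbb{R}^n$ and a matrix $A\in\mathbb{R}^{n\times m}$, $v\odot A$ denotes the matrix with entries $v_iA_{ij}$ (row scaling, $\mathrm{diag}(v)A$). $\mathbf{1}_{n}$ is the all-ones vector in $\mathbb{R}^{n}$. *)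

From HB Require Import structures.
From mathcomp Require Import all_boot all_order all_algebra.
From mathcomp Require Import all_classical all_reals all_analysis.
Set Implicit Arguments. Unset Strict Implicit. Unset Printing Implicit Defensive.
Import Order.TTheory GRing.Theory Num.Theory.
Local Open Scope ring_scope.

(* Marginals are indexed 0-based by 'I_K; the cyclic successor is ordS
   (k+1 mod K), matching the convention "K+1 means 1". *)

(* A K-way tensor with dimensions n_1 x ... x n_K: function on multi-indices. *)
Definition multi_index (K : nat) (n : 'I_K -> nat) :=
  {dffun forall k : 'I_K, 'I_(n k)}.

Definition sqdist (R : realType) (d : nat) (u v : 'rV[R]_d) : R :=
  \sum_(a < d) (u 0 a - v 0 a) ^+ 2.

Definition Kmat (R : realType) (d K : nat) (n : 'I_K -> nat) (eta : R)
  (x : forall k : 'I_K, 'I_(n k) -> 'rV[R]_d) (l t : 'I_K) : 'M[R]_(n l, n t) :=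
  \matrix_(i, j) expR (- (eta^-1 * sqdist (x l i) (x t j))).

Definition Ktensor (R : realType) (d K : nat) (n : 'I_K -> nat) (eta : R)
  (x : forall k : 'I_K, 'I_(n k) -> 'rV[R]_d) (idx : multi_index n) : R :=
  expR (- (eta^-1 * \sum_(k < K) sqdist (x k (idx k)) (x (ordS k) (idx (ordS k))))).

Definition Phi (R : realType) (K : nat) (n : 'I_K -> nat)
  (phi : forall k : 'I_K, 'I_(n k) -> R) (idx : multi_index n) : R :=
  \prod_(k < K) phi k (idx k).

Definition marg (R : realType) (K : nat) (n : 'I_K -> nat)
  (T : multi_index n -> R) (k : 'I_K) : 'cV[R]_(n k) :=
  \col_(i < n k) \sum_(idx : multi_index n | idx k == i) T idx.

Definition hadamard (R : realType) (p q : nat) (A B : 'M[R]_(p, q)) : 'M[R]_(p, q) :=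
  \matrix_(i, j) (A i j * B i j).
Definition rowscale (R : realType) (p q : nat) (v : 'I_p -> R) (A : 'M[R]_(p, q))
  : 'M[R]_(p, q) := \matrix_(i, j) (v i * A i j).

Definition cdist (K : nat) (l t : 'I_K) : nat :=
  if (l <= t)%N then (t - l)%N else (K - l + t)%N.

(* alpha^(l,t), defined by recursion on m = d(l,t):
   m <= 1 : K^(l,t);  m >= 2 : K^(l,l+1) (phi^{l+1} (.) alpha^(l+1,t)).
   (d(l+1,t) = d(l,t) - 1 whenever d(l,t) >= 2.) *)
Fixpoint alpha_aux (R : realType) (d K : nat) (n : 'I_K -> nat) (eta : R)
  (x : forall k : 'I_K, 'I_(n k) -> 'rV[R]_d) (phi : forall k : 'I_K, 'I_(n k) -> R)
  (m : nat) (l t : 'I_K) : 'M[R]_(n l, n t) :=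
  match m with
  | 0 | 1 => Kmat eta x l t
  | m'.+1 => Kmat eta x l (ordS l) *m
               rowscale (phi (ordS l)) (alpha_aux eta x phi m' (ordS l) t)
  end.

Definition alpha (R : realType) (d K : nat) (n : 'I_K -> nat) (eta : R)
  (x : forall k : 'I_K, 'I_(n k) -> 'rV[R]_d) (phi : forall k : 'I_K, 'I_(n k) -> R)
  (l t : 'I_K) : 'M[R]_(n l, n t) :=
  alpha_aux eta x phi (cdist l t) l t.

(* Expanding the product, each multi-index contributes the weight of a closed
   walk around the cycle 1 -> 2 -> ... -> K -> 1: the product of the kernel
   entries along its edges and of the phi-entries at its nodes.  Fixing the
   node k and summing out the coordinates k+1, k+2, ..., k-1 one at a time
   turns this sum into the matrix product
   K^(k,k+1) diag(phi^(k+1)) K^(k+1,k+2) ... diag(phi^(k-1)) K^(k-1,k),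
   whose factor starting at k+1 is exactly alpha^(k+1,k). *)

From HB Require Import structures.
From mathcomp Require Import all_boot all_order all_algebra.
From mathcomp Require Import all_classical all_reals all_analysis.
From mathcomp Require Import zify.
Import Order.TTheory GRing.Theory Num.Theory.
Local Open Scope ring_scope.

Section CyclicDistance.

Context {K : nat}.
Implicit Types l c : 'I_K.

Lemma val_ordS l : ordS l = (if l.+1 == K then 0 else l.+1)%N :> nat.
Proof.
rewrite /ordS /=; have := ltn_ord l; case: eqP => [->|lK1] lK; first exact: modnn.
by rewrite modn_small //; lia.
Qed.

Lemma cdist_lt l c : (cdist l c < K)%N.
Proof. by move: (ltn_ord l) (ltn_ord c); rewrite /cdist; case: (leqP l c) => *; lia. Qed.

Lemma cdist_eq0 l c : (cdist l c == 0)%N = (c == l).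
Proof.
apply/eqP/eqP => [|->]; last by rewrite /cdist leqnn subnn.
move=> d0; apply: ord_inj; move: d0 (ltn_ord l) (ltn_ord c).
by rewrite /cdist; case: (leqP l c) => *; lia.
Qed.

Lemma cdist_ordS l c : c != l -> cdist (ordS l) c = (cdist l c).-1.
Proof.
rewrite -(inj_eq (@ord_inj K)) => /eqP cl; have lK := ltn_ord l; have cK := ltn_ord c.
by rewrite /cdist val_ordS; case: eqP => *; do ?case: leqP => *; lia.
Qed.

Lemma cdist_ordS_l l : cdist (ordS l) l = K.-1.
Proof.
have lK := ltn_ord l; rewrite /cdist val_ordS.
by case: eqP => *; do ?case: leqP => *; lia.
Qed.

Definition arc l m : {set 'I_K} := [set c | (cdist l c < m)%N].

Lemma arc0 l : arc l 0 = finset.set0.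
Proof. by apply/setP => c; rewrite !inE. Qed.

Lemma arcS l m : arc l m.+1 = l |: arc (ordS l) m.
Proof.
apply/setP => c; rewrite !inE; case: (eqVneq c l) => [->|cl].
  by rewrite /cdist leqnn subnn.
by rewrite cdist_ordS //; move: cl; rewrite -cdist_eq0; case: (cdist l c).
Qed.

Lemma arc_full l : arc l K = [set: 'I_K].
Proof. by apply/setP => c; rewrite !inE cdist_lt. Qed.

Lemma notin_arc_ordS l m : (m < K)%N -> l \notin arc (ordS l) m.
Proof. by rewrite inE cdist_ordS_l; lia. Qed.

Lemma arc_ordS_setC1 l : arc (ordS l) K.-1 = [set~ l].
Proof.
apply/setP => c; rewrite !inE; case: (eqVneq c l) => [->|cl].
  by rewrite cdist_ordS_l ltnn.
by rewrite cdist_ordS //; move: (cdist_lt l c) cl; rewrite -cdist_eq0; lia.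
Qed.

End CyclicDistance.

Section MultiIndex.

Context {K : nat} {n : 'I_K -> nat}.

Definition upd (i0 : multi_index n) (c : 'I_K) (b : 'I_(n c)) : multi_index n :=
  finfun (fun c' => if @eqP _ c c' is ReflectT e then ecast z 'I_(n z) e b else i0 c').

Lemma upd_same (i0 : multi_index n) c (b : 'I_(n c)) : upd i0 c b c = b.
Proof. by rewrite /upd ffunE; case: eqP => // e; rewrite (eq_axiomK e). Qed.

Lemma upd_other (i0 : multi_index n) c (b : 'I_(n c)) c' : c' != c -> upd i0 c b c' = i0 c'.
Proof. by move=> c'c; rewrite /upd ffunE; case: eqP => // e; rewrite e eqxx in c'c. Qed.

Definition agree_off (S : {set 'I_K}) (i0 i : multi_index n) :=
  [forall c, (c \in S) || (i c == i0 c)].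

Lemma agree_off_notin {S : {set 'I_K}} {i0 i : multi_index n} {c : 'I_K} :
  agree_off S i0 i -> c \notin S -> i c = i0 c.
Proof. by move=> /forallP/(_ c); case: (c \in S) => //= /eqP. Qed.

Lemma agree_off_set0 i0 i : agree_off finset.set0 i0 i = (i == i0).
Proof.
apply/forallP/eqP => [h|-> c]; last by rewrite eqxx orbT.
by apply/ffunP => c; move: (h c); rewrite inE => /eqP.
Qed.

Lemma agree_off_setC1 c i0 i : agree_off [set~ c] i0 i = (i c == i0 c).
Proof.
apply/forallP/idP => [/(_ c)|ic c']; first by rewrite !inE eqxx.
by rewrite !inE; case: eqVneq => [->|].
Qed.

Lemma sum_agree_off_setU1 (V : nmodType) (S : {set 'I_K}) c i0 (F : multi_index n -> V) :
  c \notin S ->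
  \sum_(i | agree_off (c |: S) i0 i) F i =
  \sum_(b : 'I_(n c)) \sum_(i | agree_off S (upd i0 c b) i) F i.
Proof.
move=> cS; rewrite (partition_big (fun i : multi_index n => i c) predT) //=.
apply: eq_bigr => b _; apply: eq_bigl => i.
apply/andP/forallP => [[/forallP h /eqP ic] c'|h].
  case: (eqVneq c' c) => [->|c'c]; first by rewrite upd_same ic eqxx orbT.
  by rewrite upd_other //; move: (h c'); rewrite !inE (negbTE c'c).
split; last by move: (h c); rewrite upd_same (negbTE cS).
apply/forallP => c'; rewrite !inE; case: (eqVneq c' c) => //= c'c.
by move: (h c'); rewrite upd_other.
Qed.

End MultiIndex.

Section CyclicChain.

Context {R : comPzSemiRingType} {K : nat} {n : 'I_K -> nat}.
Context (A : forall l t : 'I_K, 'M[R]_(n l, n t)) (w : forall k : 'I_K, 'I_(n k) -> R).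

Fixpoint chain_mx (m : nat) (l t : 'I_K) : 'M[R]_(n l, n t) :=
  if m is m'.+1 then
    A l (ordS l) *m diag_mx (\row_j w (ordS l) j) *m chain_mx m' (ordS l) t
  else A l t.

Definition path_weight (l : 'I_K) (m : nat) (i : multi_index n) : R :=
  (\prod_(e in arc l m.+1) A e (ordS e) (i e) (i (ordS e))) *
  \prod_(c in arc (ordS l) m) w c (i c).

Definition cycle_weight (i : multi_index n) : R :=
  (\prod_(e < K) A e (ordS e) (i e) (i (ordS e))) * \prod_(c < K) w c (i c).

Lemma path_weight0 l i : path_weight l 0 i = A l (ordS l) (i l) (i (ordS l)).
Proof. by rewrite /path_weight arcS !arc0 big_setU1 ?inE //= !big_set0 !mulr1. Qed.

Lemma path_weightS l m i : (m.+1 < K)%N ->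
  path_weight l m.+1 i =
  A l (ordS l) (i l) (i (ordS l)) * w (ordS l) (i (ordS l)) * path_weight (ordS l) m i.
Proof.
move=> mK; have mK' : (m < K)%N by apply: ltnW.
rewrite /path_weight arcS big_setU1 ?notin_arc_ordS //=.
by rewrite [in X in _ * X = _]arcS big_setU1 ?notin_arc_ordS //= mulrACA mulrA.
Qed.

Lemma cycle_weightE k i : cycle_weight i = w k (i k) * path_weight k K.-1 i.
Proof.
have K0 : (0 < K)%N by apply: leq_ltn_trans (ltn_ord k).
rewrite /cycle_weight /path_weight prednK // arc_full arc_ordS_setC1 mulrCA.
congr (_ * _); first by apply: eq_bigl => e; rewrite inE.
by rewrite (bigD1 k) //=; congr (_ * _); apply: eq_bigl => c; rewrite !inE.
Qed.

Lemma chain_mx_empty c m l t : c \in arc (ordS l) m -> n c = 0%N -> chain_mx m l t = 0.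
Proof.
elim: m l => [|m IHm] l; first by rewrite arc0 inE.
rewrite arcS in_setU1 => /orP [/eqP -> | c_arc] nc0 /=; last by rewrite (IHm (ordS l)) // mulmx0.
apply/matrixP => a b; rewrite !mxE big1 // => j _.
by have := ltn_ord j; rewrite [X in (_ < X)%N]nc0.
Qed.

Lemma sum_path_weight m l t (i0 : multi_index n) :
  (m < K)%N -> cdist (ordS l) t = m ->
  \sum_(i | agree_off (arc (ordS l) m) i0 i) path_weight l m i = chain_mx m l t (i0 l) (i0 t).
Proof.
elim: m l i0 => [|m IHm] l i0 mK lt.
  move/eqP: lt; rewrite cdist_eq0 => /eqP ->.
  by rewrite arc0 (eq_bigl _ _ (agree_off_set0 i0)) big_pred1_eq path_weight0.
set l' := ordS l.
have tl' : t != l' by rewrite -cdist_eq0 lt.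
have l't : cdist (ordS l') t = m by rewrite cdist_ordS // lt.
have /andP [ll' l_arc] : (l != l') && (l \notin arc (ordS l') m).
  by rewrite -negb_or -in_setU1 -arcS notin_arc_ordS.
rewrite arcS sum_agree_off_setU1 ?notin_arc_ordS ?(ltnW mK) //= mxE.
apply: eq_bigr => b _; rewrite mul_mx_diag !mxE.
rewrite (eq_bigr (fun i => A l l' (i0 l) b * w l' b * path_weight l' m i)) => [|i agr].
  by rewrite -mulr_sumr IHm ?(ltnW mK) // upd_same upd_other.
rewrite path_weightS // (agree_off_notin agr l_arc).
by rewrite (agree_off_notin agr (notin_arc_ordS _ _ (ltnW mK))) upd_same upd_other.
Qed.

Lemma sum_cycle_weight k (i : 'I_(n k)) :
  \sum_(idx : multi_index n | idx k == i) cycle_weight idx = w k i * chain_mx K.-1 k k i i.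
Proof.
have K_gt0 : (0 < K)%N := leq_ltn_trans (leq0n k) (ltn_ord k).
have nk_gt0 : (0 < n k)%N := leq_ltn_trans (leq0n i) (ltn_ord i).
(* With an empty dimension there is no multi-index, and the chain runs
   through the empty node. *)
case: (pickP (fun c => n c == 0%N)) => [c /eqP nc0 | n_neq0].
  have ck : c != k by apply: contraTneq nk_gt0 => <-; rewrite nc0.
  rewrite big_pred0 => [|idx]; last by have := ltn_ord (idx c); rewrite [X in (_ < X)%N]nc0.
  by rewrite (chain_mx_empty c) ?arc_ordS_setC1 ?in_setC1 // mxE mulr0.
have n_gt0 c : (0 < n c)%N by rewrite lt0n n_neq0.
pose i0 := upd (finfun (fun c => Ordinal (n_gt0 c)) : multi_index n) k i.
rewrite (eq_bigr (fun idx => w k i * path_weight k K.-1 idx)) => [|idx /eqP idxk]; last first.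
  by rewrite (cycle_weightE k) idxk.
rewrite -mulr_sumr (eq_bigl (agree_off (arc (ordS k) K.-1) i0)) => [|idx]; last first.
  by rewrite arc_ordS_setC1 agree_off_setC1 upd_same.
by rewrite (sum_path_weight K.-1 k k i0) ?ltn_predL ?cdist_ordS_l // upd_same.
Qed.

End CyclicChain.

Lemma KtensorE (R : realType) (d K : nat) (n : 'I_K -> nat) (eta : R)
    (x : forall k : 'I_K, 'I_(n k) -> 'rV[R]_d) (idx : multi_index n) :
  Ktensor eta x idx = \prod_(e < K) Kmat eta x e (ordS e) (idx e) (idx (ordS e)).
Proof.
by rewrite /Ktensor mulr_sumr -sumrN expR_sum; apply: eq_bigr => e _; rewrite mxE.
Qed.

Lemma rowscaleE (R : realType) (p q : nat) (v : 'I_p -> R) (M : 'M[R]_(p, q)) :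
  rowscale v M = diag_mx (\row_i v i) *m M.
Proof. by rewrite mul_diag_mx; apply/matrixP => i j; rewrite !mxE. Qed.

Lemma alpha_auxE (R : realType) (d K : nat) (n : 'I_K -> nat) (eta : R)
    (x : forall k : 'I_K, 'I_(n k) -> 'rV[R]_d) (phi : forall k : 'I_K, 'I_(n k) -> R) m l t :
  alpha_aux eta x phi m.+1 l t = chain_mx (Kmat eta x) phi m l t.
Proof.
elim: m l => [//|m IHm] l.
have -> : alpha_aux eta x phi m.+2 l t =
  Kmat eta x l (ordS l) *m rowscale (phi (ordS l)) (alpha_aux eta x phi m.+1 (ordS l) t) by [].
by rewrite rowscaleE IHm mulmxA.
Qed.

Theorem theorem3 (R : realType) (K d : nat) (eta : R)
  (n : 'I_K -> nat) (x : forall k : 'I_K, 'I_(n k) -> 'rV[R]_d)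
  (phi : forall k : 'I_K, 'I_(n k) -> R) :
  (3 <= K)%N -> 0 < eta ->
  forall k : 'I_K,
    marg (fun idx => Ktensor eta x idx * Phi phi idx) k =
    hadamard (rowscale (phi k) (Kmat eta x k (ordS k)))
             (rowscale (phi (ordS k)) (alpha eta x phi (ordS k) k))^T
      *m const_mx 1.
Proof.
move=> K3 _ k; apply/matrixP => i j0.
have K1 : K.-1 = K.-2.+1 by lia.
rewrite !mxE (eq_bigr (cycle_weight (Kmat eta x) phi)) => [|idx _]; last by rewrite KtensorE.
rewrite sum_cycle_weight /alpha cdist_ordS_l K1 alpha_auxE /= mxE mulr_sumr.
by apply: eq_bigr => j _; rewrite mul_mx_diag !mxE mulr1 !mulrA.
Qed.
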